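(* Consider the $k$-agent prophet game with random tie-breaking, and assume $n\ge k$. For every agent $i$, the single threshold strategy $T^k=\frac{1}{2k}\sum_{j=1}^{k}\mathbb{E}[y_j]$ guarantees agent $i$ an expected utility of at least $\frac{1}{2k}\mathbb{E}\big[\sum_{j=1}^{k}y_j\big]$, regardless of the strategies of the other agents.
   Context: Prophet game with competing agents: there are $n$ rewards $v_1,\ldots,v_n$, where $v_t$ is a non-negative real random variable drawn from a known distribution $F_t$ (with finite mean), independently across $t$. There are $k$ agents. At each time $t=1,\ldots,n$, the value $v_t$ is revealed to all agents, and every active agent (an agent who has not yet received a reward) decides whether to select $v_t$. If exactly one agent selects $v_t$, it is assigned to that agent. If several agents select it, it is assigned to one of them by the tie-breaking rule. Under random tie-breaking, the reward goes to a uniformly random agent among those selecting it. An agent who receives a reward becomes inactive, and unselected rewards are lost forever. A strategy of an agent is a (possibly randomized) rule that, for each $t$, decides whether to select $v_t$ based on $t$, the realized value $v_t$, and the set of currently active agents. The utility $u_i(S)$ of agent $i$ under strategy profile $S=(S_i,S_{-i})$ is her expected received reward (zero if she receives none). A strategy $S_i$ guarantees agent $i$ utility $\alpha$ if $u_i(S_i,S_{-i})\ge\alpha$ for every $S_{-i}$. The single threshold strategy $T$ selects $v_t$ if and only if the agent is still active and $v_t\ge T$. For $j=1,\ldots,n$, $y_j$ denotes the $j$-th largest value among $v_1,\ldots,v_n$. *)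

From HB Require Import structures.
From mathcomp Require Import all_boot all_order all_algebra.
From mathcomp Require Import all_classical all_reals all_analysis.
Set Implicit Arguments. Unset Strict Implicit. Unset Printing Implicit Defensive.
Import Order.TTheory GRing.Theory Num.Theory.
Local Open Scope ring_scope.
Local Open Scope ereal_scope.

Section Prophet.
Variable R : realType.
(* F t = distribution of v_{t+1} (times are 0-indexed: t = 0 .. n-1). *)
Variable F : nat -> probability R R.

(* Expectation of f(v_s, v_{s+1}, ..., v_{s+m-1}) for independent v_t ~ F t,
   written as the iterated integral over the product of the F t. *)
Fixpoint iexp (m s : nat) (f : seq R -> \bar R) : \bar R :=
  match m with
  | 0 => f [::]
  | m'.+1 => \int[F s]_x iexp m' s.+1 (fun l => f (x :: l))
  end.

Definition Exp (n : nat) (g : seq R -> \bar R) : \bar R := iexp n 0 g.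

(* y_j = j-th largest value (j >= 1) among the list of realized values. *)
Definition y (j : nat) (vs : seq R) : R := nth 0%R (sort (>=%R) vs) j.-1.

Definition Tk (n k : nat) : \bar R :=
  (((2 * k)%N%:R)^-1)%R%:E * \sum_(1 <= j < k.+1) Exp n (fun vs => (y j vs)%:E).

(* A (behavioral, possibly randomized) strategy profile for k agents:
   p j t v A = probability that agent j selects value v at time t when the set
   of active agents is A (agents randomize independently). *)
Definition profile (k : nat) := 'I_k -> nat -> R -> {set 'I_k} -> R.

Definition thr (k : nat) (T : \bar R) : nat -> R -> {set 'I_k} -> R :=
  fun _ v _ => if T <= v%:E then 1%R else 0%R.

Definition upd (k : nat) (p : profile k) (i : 'I_k)
  (si : nat -> R -> {set 'I_k} -> R) : profile k :=
  fun j => if j == i then si else p j.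

Definition psel (k : nat) (p : profile k) (t : nat) (v : R)
  (A S : {set 'I_k}) : R :=
  \prod_(j in A) (if j \in S then p j t v A else 1 - p j t v A)%R.

(* Expected utility of agent i from time t on, with m rewards remaining and
   active set A, under random tie-breaking. *)
Fixpoint util (k : nat) (p : profile k) (i : 'I_k) (m t : nat)
  (A : {set 'I_k}) : \bar R :=
  match m with
  | 0 => 0
  | m'.+1 =>
    if i \notin A then 0 else
    \int[F t]_v
      \sum_(S in powerset A)
        (psel p t v A S)%:E *
        (if #|S| == 0%N then util p i m' t.+1 A
         else \sum_(j in S) ((#|S|%:R)^-1)%:E *
                (if j == i then v%:E else util p i m' t.+1 (A :\ j)))
  end.

Definition utility (k : nat) (p : profile k) (i : 'I_k) (n : nat) : \bar R :=
  util p i n 0 [set: 'I_k].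

End Prophet.

From HB Require Import structures.
From mathcomp Require Import all_boot all_order all_algebra.
From mathcomp Require Import all_classical all_reals all_analysis.
From mathcomp Require Import zify lra.
From mathcomp Require Import measurable_realfun.
Import Order.TTheory GRing.Theory Num.Theory.
Local Open Scope ring_scope.

(* Let (x - T)^+ be the excess of a value over the threshold T.  While agent
   i is active, each step either leaves her at least T (she wins a value
   >= T, or the game goes on), or v_t >= T and she competes for v_t against
   at most k agents, winning it with probability at least 1/k.  By induction
   on the remaining horizon her utility is at least
   min (T, (1/k) sum_t E[(v_t - T)^+]).  Pointwise
   sum_{j <= k} y_j <= k T + sum_t (v_t - T)^+, so for T = E[sum_j y_j]/(2k)
   we get 2 k T <= k T + sum_t E[(v_t - T)^+] and the minimum is T.

   Expectations are iterated integrals of extended reals; they are finite,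
   monotone and additive on functions of the sample that are coordinatewise
   nondecreasing and bounded by an affine function of the l1-norm.
   Monotonicity is also what makes the partial integrals measurable, since a
   nondecreasing real function is Borel. *)

Section OrderStatistics.
Context {R : realDomainType}.
Implicit Types (s l : seq R) (c : R).

Lemma ltn_count_ge_nth s q c : sorted >=%R s -> (q < size s)%N ->
  c <= nth 0 s q -> (q < count (>= c) s)%N.
Proof.
elim: s q => [//|x s IH] [|q] /= hs hq hc; first by rewrite hc.
have hx : c <= x.
  apply: le_trans hc _; move/allP: (order_path_min ge_trans hs); apply.
  exact: mem_nth.
by rewrite hx add1n ltnS IH //; exact: path_sorted hs.
Qed.

Lemma count_ge_leq_nth s q c : sorted >=%R s -> nth 0 s q < c ->
  (count (>= c) s <= q)%N.
Proof.
elim: s q => [//|x s IH] [|q] /= hs hc.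
  rewrite leNgt hc /= (eq_in_count (a2 := pred0)) ?count_pred0 // => z zs /=.
  rewrite leNgt; apply/negbF.
  by move/allP: (order_path_min ge_trans hs) => /(_ z zs) /le_lt_trans; apply.
by have := IH q (path_sorted hs) hc; case: (c <= x) => /=; lia.
Qed.

Lemma count_ge_all2_le l l' c : all2 <=%R l l' ->
  (count (>= c) l <= count (>= c) l')%N.
Proof.
elim: l l' => [|x l IH] [|x' l'] //= /andP[hx hl].
have := IH _ hl; case hc: (c <= x); case hc': (c <= x') => /=; try lia.
by move: hc'; rewrite (le_trans hc hx).
Qed.

Lemma all2_le_refl l : all2 <=%R l l.
Proof. by elim: l => //= x l ->; rewrite lexx. Qed.

Lemma nth_all2_le l l' t : all2 <=%R l l' -> nth 0 l t <= nth 0 l' t.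
Proof.
elim: l l' t => [|x l IH] [|x' l'] [|t] //= /andP[h1 h2]; first exact: h1.
exact: IH.
Qed.

Lemma norm_nth_le_sum l t : `|nth 0 l t| <= \sum_(x <- l) `|x|.
Proof.
elim: l t => [|x l IH] [|t] /=; rewrite ?big_nil ?big_cons ?normr0 //.
  by rewrite lerDl sumr_ge0.
by apply: le_trans (IH t) _; rewrite lerDr.
Qed.

(* If c is the q-th largest entry of l, more than q entries of l, hence of l',
   are >= c. *)
Lemma nth_sort_ge_all2_le l l' q : all2 <=%R l l' ->
  nth 0 (sort >=%R l) q <= nth 0 (sort >=%R l') q.
Proof.
move=> ll'; have hsz : size l = size l' by move: ll'; rewrite all2E => /andP[/eqP].
have [hq|hq] := leqP (size l) q; first by rewrite !nth_default ?size_sort -?hsz.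
set c := nth 0 (sort >=%R l) q.
have sorted_sort s : sorted >=%R (sort >=%R s).
  by apply: sort_sorted => x y; exact: le_total.
have cl : (q < count (>= c) l)%N.
  rewrite -(permP (permEl (perm_sort >=%R l))).
  by apply: ltn_count_ge_nth; rewrite ?size_sort.
have cl' := leq_trans cl (count_ge_all2_le _ _ c ll').
rewrite -(permP (permEl (perm_sort >=%R l'))) in cl'.
rewrite leNgt; apply/negP => /(count_ge_leq_nth _ _ _ (sorted_sort l')).
by move/(leq_trans cl'); rewrite ltnn.
Qed.

Lemma norm_nth_sort_ge_le_sum l q : `|nth 0 (sort >=%R l) q| <= \sum_(x <- l) `|x|.
Proof. by rewrite -(perm_big _ (permEl (perm_sort >=%R l))); exact: norm_nth_le_sum. Qed.

End OrderStatistics.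

Section Excess.
Context {R : realDomainType}.
Implicit Types (T x : R).

Definition excess T x : R := if T <= x then x - T else 0.

Lemma excess_ge0 T x : 0 <= excess T x.
Proof. by rewrite /excess; case: ifP => // h; rewrite subr_ge0. Qed.

Lemma excess_nondecreasing T : {homo excess T : x y / x <= y}.
Proof.
move=> x y xy; rewrite /excess; case: ifP => hx; case: ifP => hy //.
- by rewrite lerB.
- by move: hy; rewrite (le_trans hx xy).
- by rewrite subr_ge0.
Qed.

Lemma norm_excess_le T x : `|excess T x| <= `|T| + `|x|.
Proof.
rewrite ger0_norm ?excess_ge0 // /excess; case: ifP => _; last by rewrite addr_ge0.
by apply: le_trans (ler_norm _) _; rewrite [leRHS]addrC; exact: ler_normB.
Qed.

Lemma le_add_excess T x : x <= T + excess T x.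
Proof.
rewrite /excess; case: ifP => h; first by rewrite addrC subrK.
by rewrite addr0; move/negbT: h; rewrite -ltNge => /ltW.
Qed.

Lemma sum_nth_sort_ge_le_excess T k l : (k <= size l)%N ->
  \sum_(0 <= j < k) nth 0 (sort >=%R l) j <=
    k%:R * T + \sum_(0 <= t < size l) excess T (nth 0 l t).
Proof.
move=> kl; set s := sort >=%R l.
apply: le_trans (_ : _ <= \sum_(0 <= j < k) (T + excess T (nth 0 s j))) _.
  by apply: ler_sum => j _; exact: le_add_excess.
rewrite big_split /= sumr_const_nat subn0 mulr_natl lerD2l.
apply: le_trans (_ : _ <= \sum_(0 <= j < size l) excess T (nth 0 s j)) _.
  rewrite (@big_cat_nat _ _ _ k 0 (size l)) //= lerDl.
  by apply: sumr_ge0 => j _; exact: excess_ge0.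
rewrite -{1}(size_sort >=%R l) -/s -!(big_nth 0 xpredT (excess T)).
by rewrite (perm_big _ (permEl (perm_sort >=%R l))).
Qed.

End Excess.

Lemma sum_ord_shift (V : nmodType) (g : nat -> V) s m :
  \sum_(u < m.+1) g (s + u)%N = g s + \sum_(u < m) g (s.+1 + u)%N.
Proof.
by rewrite big_ord_recl addn0; congr (_ + _); apply: eq_bigr => u _; rewrite addSnnS.
Qed.

Lemma sum_powerset_prod_select (V : comRingType) (I : finType) (A : {set I})
    (q : I -> V) :
  \sum_(S in powerset A) \prod_(j in A) (if j \in S then q j else 1 - q j) = 1.
Proof.
have := @bigA_distr V 0 1 *%R +%R I (fun j => if j \in A then q j else 0)
  (fun j => if j \in A then 1 - q j else 1).
rewrite big1 => [distr|j _]; last first.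
  case: (j \in A); first by change (q j + (1 - q j) = 1); rewrite addrC subrK.
  by change (0 + 1 = 1 :> V); rewrite add0r.
rewrite [RHS]distr [RHS](bigID (fun S : {set I} => S \subset A)) /= [X in _ = _ + X]big1.
  rewrite addr0; apply: eq_big => [S|S SA]; first by rewrite powersetE.
  rewrite [LHS]big_mkcond /=; apply: eq_bigr => j _.
  case jA: (j \in A) => //; case jS: (j \in S) => //.
  by move: SA; rewrite powersetE => /fintype.subsetP /(_ _ jS); rewrite jA.
by move=> S /subsetPn [j jS jA]; rewrite (bigD1 j) //= jS (negbTE jA) mul0r.
Qed.

Local Open Scope ereal_scope.

Lemma emeasurable_sum_in d (T : measurableType d) (R : realType) (D : set T)
    (I : finType) (P : pred I) (h : I -> T -> \bar R) :
  (forall j, measurable_fun D (h j)) -> measurable_fun D (fun x => \sum_(j in P) h j x).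
Proof. by move=> mh; under eq_fun do rewrite -big_enum; exact: emeasurable_sum. Qed.

Lemma measurable_prod_in d (T : measurableType d) (R : realType) (D : set T)
    (I : finType) (P : pred I) (h : I -> T -> R) :
  (forall j, measurable_fun D (h j)) -> measurable_fun D (fun x => \prod_(j in P) h j x)%R.
Proof. by move=> mh; under eq_fun do rewrite -big_enum; exact: measurable_prod. Qed.

Lemma integral_cst_probability (R : realType) (P : probability R R) (c : R) :
  \int[P]_x (EFin \o cst c) x = c%:E.
Proof.
have -> : (fun x => (EFin \o cst c) x) = cst c%:E by [].
by rewrite integral_cst // -[RHS]mule1; congr (_ * _); exact: probability_setT.
Qed.

Lemma le_integral_integrable_measurable d (T : measurableType d) (R : realType)
    (mu : {measure set T -> \bar R}) (f g : T -> \bar R) :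
  mu.-integrable setT f -> measurable_fun setT g -> (forall x, f x <= g x) ->
  \int[mu]_x f x <= \int[mu]_x g x.
Proof.
move=> intf mg fg; have mf := measurable_int _ intf.
rewrite integralE [leRHS]integralE; apply: leeB.
  apply: ge0_le_integral => //; try exact: measurable_funepos.
  by move=> x _; apply: (funepos_le (D := setT)); [move=> y _; exact: fg | exact: in_setT].
apply: ge0_le_integral => //; try exact: measurable_funeneg.
by move=> x _; apply: (funeneg_le (D := setT)); [move=> y _; exact: fg | exact: in_setT].
Qed.

Section ProphetGame.
Variables (R : realType) (F : nat -> probability R R) (n : nat).
Hypothesis integrable_value :
  forall t, (t < n)%N -> (F t).-integrable setT (fun x : R => x%:E).

Definition coord_nondecreasing (f : seq R -> R) :=
  forall l l', all2 <=%R l l' -> (f l <= f l')%R.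

Definition affinely_bounded (f : seq R -> R) (a b : R) :=
  forall l, (`|f l| <= a + b * \sum_(x <- l) `|x|)%R.

Definition regular (f : seq R -> R) :=
  exists a b, (0 <= b)%R /\ coord_nondecreasing f /\ affinely_bounded f a b.

Definition abs_mean t := fine (\int[F t]_x `|x|%:E).

Definition rexpect m s (f : seq R -> R) := fine (iexp F m s (fun l => (f l)%:E)).

Lemma integrable_abs {t} : (t < n)%N -> (F t).-integrable setT (fun x => `|x|%:E).
Proof. by move=> /integrable_value/integrable_abse. Qed.

Lemma integral_abs {t} : (t < n)%N -> \int[F t]_x `|x|%:E = (abs_mean t)%:E.
Proof. by move=> tn; rewrite fineK // (integrable_fin_num _ (integrable_abs tn)). Qed.

Lemma integral_affine_abs {t} c b : (t < n)%N ->
  (F t).-integrable setT (fun x => (c + b * `|x|)%R%:E) /\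
  \int[F t]_x (c + b * `|x|)%R%:E = (c + b * abs_mean t)%R%:E.
Proof.
move=> tn.
have intc : (F t).-integrable setT (EFin \o cst c).
  exact: finite_measure_integrable_cst.
have intb : (F t).-integrable setT (fun x => b%:E * `|x|%:E).
  exact: integrableZl (integrable_abs tn).
have intcb : (F t).-integrable setT ((EFin \o cst c) \+ (fun x => b%:E * `|x|%:E))%E.
  exact: integrableD.
split; first by apply: eq_integrable intcb => //= x _.
rewrite (eq_integral (fun x : R => (EFin \o cst c) x + b%:E * `|x|%:E)) //.
rewrite integralD // integralZl //; last exact: integrable_abs.
by rewrite integral_abs // integral_cst_probability.
Qed.

Lemma coord_nondecreasing_cons x {f} :
  coord_nondecreasing f -> coord_nondecreasing (fun l => f (x :: l)).
Proof. by move=> mf l l' h; apply: mf; rewrite /= lexx. Qed.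

Lemma affinely_bounded_cons x {f a b} : affinely_bounded f a b ->
  affinely_bounded (fun l => f (x :: l)) (a + b * `|x|)%R b.
Proof. by move=> bf l; apply: le_trans (bf (x :: l)) _; rewrite big_cons mulrDr addrA. Qed.

Lemma regular_cons x {f} : regular f -> regular (fun l => f (x :: l)).
Proof.
case=> a [b [hb [mf bf]]]; exists (a + b * `|x|)%R, b.
by split; [|split; [exact: coord_nondecreasing_cons | exact: affinely_bounded_cons]].
Qed.

Lemma regular_add {f g} : regular f -> regular g -> regular (fun l => f l + g l)%R.
Proof.
case=> a [b [hb [mf bf]]] [a' [b' [hb' [mg bg]]]].
exists (a + a')%R, (b + b')%R; split; first exact: addr_ge0.
split; first by move=> l l' h; apply: lerD; [exact: mf | exact: mg].
move=> l; apply: le_trans (ler_normD _ _) _.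
by apply: le_trans (lerD (bf l) (bg l)) _; rewrite mulrDl addrACA.
Qed.

Lemma regular_cst c : regular (fun=> c).
Proof.
exists `|c|%R, 0%R; split=> //; split; first by move=> *; rewrite lexx.
by move=> l; rewrite mul0r addr0.
Qed.

Lemma regular_sum (I : Type) (r : seq I) (fs : I -> seq R -> R) :
  (forall j, regular (fs j)) -> regular (fun l => \sum_(j <- r) fs j l)%R.
Proof.
move=> rfs; elim: r => [|j r IH].
  by under eq_fun do rewrite big_nil; exact: regular_cst.
by under eq_fun do rewrite big_cons; exact: regular_add.
Qed.

Definition finite_bounded m s := forall f a b, (0 <= b)%R ->
  coord_nondecreasing f -> affinely_bounded f a b ->
  iexp F m s (fun l => (f l)%:E) = (rexpect m s f)%:E /\
  (`|rexpect m s f| <= a + b * \sum_(u < m) abs_mean (s + u))%R.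

Definition monotone_on_size m s := forall f g, regular f -> regular g ->
  (forall l, size l = m -> f l <= g l)%R -> (rexpect m s f <= rexpect m s g)%R.

Definition rexpect_head m s f x := rexpect m s.+1 (fun l => f (x :: l)).

Section InductionStep.
Variables m s : nat.
Hypothesis lt_s_n : (s < n)%N.
Hypothesis fin_next : finite_bounded m s.+1.
Hypothesis mono_next : monotone_on_size m s.+1.

Lemma iexp_S_head {f a b} : (0 <= b)%R ->
  coord_nondecreasing f -> affinely_bounded f a b ->
  iexp F m.+1 s (fun l => (f l)%:E) = \int[F s]_x (rexpect_head m s f x)%:E.
Proof.
move=> hb mf bf /=; apply: eq_integral => x _.
by have [-> _] := fin_next _ _ _ hb (coord_nondecreasing_cons x mf) (affinely_bounded_cons x bf).
Qed.

Lemma norm_rexp_head_le {f a b} : (0 <= b)%R ->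
  coord_nondecreasing f -> affinely_bounded f a b -> forall x,
  (`|rexpect_head m s f x| <= (a + b * \sum_(u < m) abs_mean (s.+1 + u)) + b * `|x|)%R.
Proof.
move=> hb mf bf x.
have [_] := fin_next _ _ _ hb (coord_nondecreasing_cons x mf) (affinely_bounded_cons x bf).
by move/le_trans; apply; rewrite addrAC.
Qed.

Lemma rexpect_head_nondecreasing {f} : regular f -> {homo rexpect_head m s f : x y / (x <= y)%R}.
Proof.
move=> rf x y xy; apply: mono_next; try exact: regular_cons.
have [a [b [_ [mf _]]]] := rf.
by move=> l _; apply: mf; rewrite /= xy all2_le_refl.
Qed.

Lemma measurable_rexp_head {f} : regular f ->
  measurable_fun setT (fun x => (rexpect_head m s f x)%:E).
Proof.
move=> rf; apply/measurable_EFinP.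
exact: nondecreasing_measurable (rexpect_head_nondecreasing rf).
Qed.

Lemma integrable_rexp_head {f} : regular f ->
  (F s).-integrable setT (fun x => (rexpect_head m s f x)%:E).
Proof.
move=> rf; have [a [b [hb [mf bf]]]] := rf.
have [intB _] := integral_affine_abs (a + b * \sum_(u < m) abs_mean (s.+1 + u)) b lt_s_n.
apply: le_integrable intB => //; first exact: measurable_rexp_head.
move=> x _ /=; rewrite lee_fin; apply: le_trans (norm_rexp_head_le hb mf bf x) _.
exact: ler_norm.
Qed.

Lemma fin_num_integral_rexp_head {f} : regular f ->
  \int[F s]_x (rexpect_head m s f x)%:E \is a fin_num.
Proof. by move=> rf; exact: integrable_fin_num (integrable_rexp_head rf). Qed.

Lemma finite_bounded_S : finite_bounded m.+1 s.
Proof.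
move=> f a b hb mf bf; have rf : regular f by exists a, b.
have E : iexp F m.+1 s (fun l => (f l)%:E) = (rexpect m.+1 s f)%:E.
  by rewrite /rexpect (iexp_S_head hb mf bf) fineK // fin_num_integral_rexp_head.
split=> //; rewrite -lee_fin -abse_EFin -E (iexp_S_head hb mf bf).
apply: le_trans (le_abse_integral _ _ (measurable_rexp_head rf)) _ => //.
set c := (a + b * \sum_(u < m) abs_mean (s.+1 + u))%R.
have [intB valB] := integral_affine_abs c b lt_s_n.
apply: le_trans (_ : _ <= \int[F s]_x (c + b * `|x|)%R%:E) _.
  apply: ge0_le_integral => //; first by apply: measurableT_comp => //; exact: measurable_rexp_head.
    exact: measurable_int intB.
  by move=> x _; rewrite lee_fin; exact: norm_rexp_head_le.
by rewrite valB lee_fin sum_ord_shift /c; lra.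
Qed.

Lemma monotone_on_size_S : monotone_on_size m.+1 s.
Proof.
move=> f g rf rg fg; have [a [b [hb [mf bf]]]] := rf; have [a' [b' [hb' [mg bg]]]] := rg.
rewrite /rexpect (iexp_S_head hb mf bf) (iexp_S_head hb' mg bg).
apply: fine_le; try exact: fin_num_integral_rexp_head.
apply: le_integral => //; try exact: integrable_rexp_head.
move=> x _; rewrite lee_fin; apply: mono_next; try exact: regular_cons.
by move=> l hl; apply: fg; rewrite /= hl.
Qed.

End InductionStep.

Lemma rexpect_regular {m s} : (s + m <= n)%N -> finite_bounded m s /\ monotone_on_size m s.
Proof.
elim: m s => [|m IH] s hs.
  split; last by move=> f g _ _ fg; exact: fg.
  move=> f a b _ _ bf; split=> //.
  by apply: le_trans (bf [::]) _; rewrite big_nil big_ord0.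
have hs' : (s.+1 + m <= n)%N by move: hs; clear; lia.
have [fin mono] := IH s.+1 hs'.
have sn : (s < n)%N by move: hs; clear; lia.
by split; [exact: finite_bounded_S | exact: monotone_on_size_S].
Qed.

Lemma iexp_regular m s f : (s + m <= n)%N -> regular f ->
  iexp F m s (fun l => (f l)%:E) = (rexpect m s f)%:E.
Proof.
move=> hs [a [b [hb [mf bf]]]].
by have [->] := (rexpect_regular hs).1 f a b hb mf bf.
Qed.

Lemma rexpect_le m s f g : (s + m <= n)%N -> regular f -> regular g ->
  (forall l, size l = m -> f l <= g l)%R -> (rexpect m s f <= rexpect m s g)%R.
Proof. by move=> hs; exact: (rexpect_regular hs).2. Qed.

Lemma rexpect_add m s f g : (s + m <= n)%N -> regular f -> regular g ->
  rexpect m s (fun l => f l + g l)%R = (rexpect m s f + rexpect m s g)%R.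
Proof.
elim: m s f g => [//|m IH] s f g hs rf rg.
have hs' : (s.+1 + m <= n)%N by move: hs; clear; lia.
have sn : (s < n)%N by move: hs; clear; lia.
have [fin mono] := rexpect_regular hs'.
have [a [b [hb [mf bf]]]] := rf; have [a' [b' [hb' [mg bg]]]] := rg.
have [a'' [b'' [hb'' [mfg bfg]]]] := regular_add rf rg.
rewrite /rexpect (iexp_S_head _ _ fin hb'' mfg bfg).
rewrite (iexp_S_head _ _ fin hb mf bf) (iexp_S_head _ _ fin hb' mg bg).
rewrite (eq_integral (fun x => (rexpect_head m s f x)%:E + (rexpect_head m s g x)%:E)).
  2: by move=> x _; rewrite /rexpect_head IH //; exact: regular_cons.
rewrite integralD //; try exact: integrable_rexp_head.
by rewrite fineD //; exact: fin_num_integral_rexp_head.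
Qed.

Lemma iexp_cst m s (c : R) : iexp F m s (fun=> c%:E) = c%:E.
Proof.
elim: m s => [//|m IH] s /=.
by under eq_integral do rewrite IH; exact: integral_cst_probability.
Qed.

Lemma rexpect_cst m s (c : R) : rexpect m s (fun=> c) = c.
Proof. by rewrite /rexpect iexp_cst. Qed.

Lemma rexpect_sum m s (I : Type) (r : seq I) (fs : I -> seq R -> R) :
  (s + m <= n)%N -> (forall j, regular (fs j)) ->
  rexpect m s (fun l => \sum_(j <- r) fs j l)%R = (\sum_(j <- r) rexpect m s (fs j))%R.
Proof.
move=> hs rfs; elim: r => [|j r IH].
  by under eq_fun do rewrite big_nil; rewrite big_nil rexpect_cst.
under eq_fun do rewrite big_cons.
by rewrite big_cons rexpect_add ?IH //; exact: regular_sum.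
Qed.

Definition mean_excess (T : R) t := fine (\int[F t]_x (excess T x)%:E).

Lemma integral_affine_excess (T c d : R) {t} : (t < n)%N ->
  (F t).-integrable setT (fun x => (c + excess T x * d)%R%:E) /\
  \int[F t]_x (c + excess T x * d)%R%:E = (c + mean_excess T t * d)%R%:E.
Proof.
move=> tn; have [intB _] := integral_affine_abs `|T|%R 1%R tn.
have intE : (F t).-integrable setT (fun x => (excess T x)%:E).
  apply: le_integrable intB => //.
    by apply/measurable_EFinP; exact: nondecreasing_measurable (excess_nondecreasing T).
  move=> x _ /=; rewrite lee_fin mul1r; apply: le_trans (norm_excess_le T x) _.
  exact: ler_norm.
have intc : (F t).-integrable setT (EFin \o cst c).
  exact: finite_measure_integrable_cst.
have intd : (F t).-integrable setT (fun x => d%:E * (excess T x)%:E).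
  exact: integrableZl intE.
have intcd : (F t).-integrable setT ((EFin \o cst c) \+ (fun x => d%:E * (excess T x)%:E))%E.
  exact: integrableD.
split; first by apply: eq_integrable intcd => //= x _; rewrite mulrC.
rewrite (eq_integral (fun x : R => (EFin \o cst c) x + d%:E * (excess T x)%:E)).
  2: by move=> x _ /=; rewrite mulrC.
rewrite integralD // integralZl // integral_cst_probability /mean_excess.
by rewrite EFinD EFinM fineK ?(integrable_fin_num _ intE) // muleC.
Qed.

Lemma mean_excess_ge0 (T : R) t : (0 <= mean_excess T t)%R.
Proof. by rewrite fine_ge0 // integral_ge0 // => x _; rewrite lee_fin excess_ge0. Qed.

Lemma regular_excess_nth (T : R) t : regular (fun l => excess T (nth 0%R l t)).
Proof.
exists `|T|%R, 1%R; split => //; split.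
  by move=> l l' h; apply: excess_nondecreasing; exact: nth_all2_le.
move=> l; apply: le_trans (norm_excess_le T _) _; rewrite mul1r lerD2l.
exact: norm_nth_le_sum.
Qed.

Lemma rexpect_excess_nth (T : R) m : forall s t, (s + m <= n)%N -> (t < m)%N ->
  rexpect m s (fun l => excess T (nth 0%R l t)) = mean_excess T (s + t).
Proof.
elim: m => [//|m IH] s t hs ht.
have hs' : (s.+1 + m <= n)%N by move: hs; clear; lia.
have [a [b [hb [mf bf]]]] := regular_excess_nth T t.
rewrite /rexpect (iexp_S_head _ _ (rexpect_regular hs').1 hb mf bf).
case: t ht mf bf => [|t] ht _ _.
  rewrite addn0 /mean_excess; congr fine; apply: eq_integral => x _.
  by rewrite /rexpect_head /= rexpect_cst.
rewrite (eq_integral (fun x => (EFin \o cst (mean_excess T (s.+1 + t))) x)).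
  by rewrite integral_cst_probability /= addSnnS.
by move=> x _; rewrite /rexpect_head /= IH.
Qed.

Lemma regular_y j : regular (y j).
Proof.
exists 0%R, 1%R; split => //; split.
  by move=> l l' h; exact: nth_sort_ge_all2_le.
by move=> l; rewrite add0r mul1r; exact: norm_nth_sort_ge_le_sum.
Qed.

Lemma rexpect_sum_y_le (T : R) k : (k <= n)%N ->
  (rexpect n 0 (fun l => \sum_(1 <= j < k.+1) y j l) <=
     k%:R * T + \sum_(t < n) mean_excess T t)%R.
Proof.
move=> kn.
have -> : (\sum_(t < n) mean_excess T t =
    rexpect n 0 (fun l => \sum_(0 <= t < n) excess T (nth 0%R l t)))%R.
  rewrite rexpect_sum //; last by move=> t; exact: regular_excess_nth.
  by rewrite big_mkord; apply: eq_bigr => t _; rewrite rexpect_excess_nth.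
rewrite -(rexpect_cst n 0 (k%:R * T)%R) -rexpect_add //; first last.
- by apply: regular_sum => t; exact: regular_excess_nth.
- exact: regular_cst.
apply: rexpect_le => //.
- by apply: regular_sum => j; exact: regular_y.
- apply: regular_add; first exact: regular_cst.
  by apply: regular_sum => t; exact: regular_excess_nth.
move=> l hl; rewrite big_add1 -hl.
by apply: sum_nth_sort_ge_le_excess; rewrite hl.
Qed.

Section ThresholdStrategy.
Variables (k : nat) (i : 'I_k) (p : profile R k) (T : R).
Hypothesis p01 : forall j t v A, j != i -> (0 <= p j t v A <= 1)%R.
Hypothesis measurable_p :
  forall j t A, j != i -> measurable_fun setT (fun v => p j t v A).

Implicit Types (A S : {set 'I_k}).

Local Notation pT := (upd p i (thr (k:=k) T%:E)).

Lemma upd_thr_01 j t v A : (0 <= pT j t v A <= 1)%R.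
Proof.
rewrite /upd; case: eqP => [_|/eqP ji]; last exact: p01.
by rewrite /thr; case: ifP => _; rewrite ?lexx ?ler01.
Qed.

Lemma measurable_upd_thr j t A : measurable_fun setT (fun v => pT j t v A).
Proof.
rewrite /upd; case: eqP => [_|/eqP ji]; last exact: measurable_p.
apply: nondecreasing_measurable => // x x' xx'; rewrite /thr.
case: ifP => hx; case: ifP => hx' //.
by move: hx'; rewrite (le_trans hx) // lee_fin.
Qed.

Lemma psel_ge0 t v A S : (0 <= psel pT t v A S)%R.
Proof.
apply: prodr_ge0 => j _; have /andP[h0 h1] := upd_thr_01 j t v A.
by case: (j \in S) => //; rewrite subr_ge0.
Qed.

Lemma measurable_psel t A S : measurable_fun setT (fun v => psel pT t v A S).
Proof.
apply: measurable_prod_in => j; case: (j \in S); first exact: measurable_upd_thr.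
by apply: measurable_funB; [exact: measurable_cst | exact: measurable_upd_thr].
Qed.

Lemma psel_selected t v A S : i \in A -> i \in S -> psel pT t v A S != 0%R ->
  (T <= v)%R.
Proof.
move=> iA iS; rewrite /psel (bigD1 i) //= iS /upd eqxx /thr.
by case: ifP => [|_]; [rewrite lee_fin | rewrite mul0r eqxx].
Qed.

Lemma psel_unselected t v A S : i \in A -> i \notin S -> psel pT t v A S != 0%R ->
  excess T v = 0%R.
Proof.
move=> iA iS; rewrite /psel (bigD1 i) //= (negbTE iS) /upd eqxx /thr.
case: ifP => [|h]; first by rewrite subrr mul0r eqxx.
by move=> _; rewrite /excess; move: h; rewrite lee_fin => ->.
Qed.

Lemma psel_sum t v A : (\sum_(S in powerset A) psel pT t v A S = 1)%R.
Proof. exact: sum_powerset_prod_select. Qed.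

Definition tie_payoff m t A S v :=
  if #|S| == 0%N then util F pT i m t.+1 A
  else \sum_(j in S) ((#|S|%:R)^-1)%:E *
         (if j == i then v%:E else util F pT i m t.+1 (A :\ j)).

Definition stage_payoff m t A v :=
  \sum_(S in powerset A) (psel pT t v A S)%:E * tie_payoff m t A S v.

Lemma util_S m t A : i \in A ->
  util F pT i m.+1 t A = \int[F t]_v stage_payoff m t A v.
Proof. by move=> iA; rewrite /= iA. Qed.

Lemma measurable_stage_payoff m t A : measurable_fun setT (stage_payoff m t A).
Proof.
apply: emeasurable_sum_in => S; apply: emeasurable_funM.
  by apply/measurable_EFinP; exact: measurable_psel.
rewrite /tie_payoff; case: (#|S| == 0%N); first exact: measurable_cst.
apply: emeasurable_sum_in => j; apply: measurable_funeM.
by case: (j == i); [exact: EFin_measurable | exact: measurable_cst].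
Qed.

(* Competing for v, agent i wins it with probability 1/|S| >= 1/k, and
   v = T + excess T v >= M + excess T v; if she does not compete, v < T. *)
Lemma tie_payoff_ge m t A S M v : i \in A -> S \subset A ->
  psel pT t v A S != 0%R -> (M <= T)%R ->
  (forall A', i \in A' -> M%:E <= util F pT i m t.+1 A') ->
  (M + excess T v / k%:R)%R%:E <= tie_payoff m t A S v.
Proof.
move=> iA SA w0 MT IH; rewrite /tie_payoff.
have out : i \notin S -> excess T v = 0%R by move=> iS; exact: psel_unselected w0.
case: ifP => S0.
  have iS : i \notin S by move: S0; rewrite cards_eq0 => /eqP ->; rewrite finset.in_set0.
  by rewrite out // mul0r addr0; exact: IH.
have Sk : (#|S| <= k)%N by rewrite -[X in (_ <= X)%N]card_ord; exact: max_card.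
apply: le_trans (_ : _ <= \sum_(j in S) ((#|S|%:R)^-1)%:E *
   (M + (if j == i then excess T v else 0))%R%:E) _; last first.
  apply: lee_sum => j jS; apply: lee_wpmul2l; first by rewrite lee_fin invr_ge0 ler0n.
  case: eqP => [ji|/eqP ji].
    have Tv : (T <= v)%R by apply: psel_selected w0; rewrite // -ji.
    by rewrite /excess Tv lee_fin; lra.
  by rewrite addr0; apply: IH; rewrite in_setD1 iA andbT eq_sym.
under eq_bigr do rewrite -EFinM.
rewrite sumEFin -mulr_sumr big_split /= sumr_const lee_fin -big_mkcondr /=.
have S_gt0 : (0 < #|S|%:R :> R)%R by rewrite ltr0n lt0n S0.
rewrite mulrDr -[(M *+ _)%R]mulr_natr mulrCA mulVf ?mulr1 ?gt_eqF // lerD2l.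
case: (boolP (i \in S)) => iS; first last.
  by rewrite out // mul0r big1_eq mulr0.
rewrite (big_pred1 i) => [|j]; last by rewrite /= andb_idl // => /eqP ->.
rewrite mulrC; apply: ler_wpM2r; first exact: excess_ge0.
have k_pos : (k%:R : R) \is Num.pos.
  by rewrite posrE ltr0n; apply: leq_trans Sk; rewrite lt0n S0.
by rewrite lef_pV2 ?posrE // ler_nat.
Qed.

Lemma stage_payoff_ge m t A M v : i \in A -> (M <= T)%R ->
  (forall A', i \in A' -> M%:E <= util F pT i m t.+1 A') ->
  (M + excess T v / k%:R)%R%:E <= stage_payoff m t A v.
Proof.
move=> iA MT IH; rewrite /stage_payoff.
have -> : (M + excess T v / k%:R)%R%:E =
    \sum_(S in powerset A) (psel pT t v A S)%:E * (M + excess T v / k%:R)%R%:E.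
  under eq_bigr do rewrite -EFinM.
  by rewrite sumEFin -mulr_suml psel_sum mul1r.
apply: lee_sum => S; rewrite powersetE => SA.
have [w0|w0] := eqVneq (psel pT t v A S) 0%R; first by rewrite w0 !mul0e.
by apply: lee_wpmul2l; [rewrite lee_fin psel_ge0 | exact: tie_payoff_ge].
Qed.

Lemma util_thr_ge m : forall t A, (t + m <= n)%N -> i \in A ->
  (Num.min T ((\sum_(u < m) mean_excess T (t + u)) / k%:R)%R)%:E <=
    util F pT i m t A.
Proof.
elim: m => [|m IH] t A ht iA.
  by rewrite /= big_ord0 mul0r lee_fin ge_min lexx orbT.
have tn : (t < n)%N by move: ht; clear; lia.
have ht' : (t.+1 + m <= n)%N by move: ht; clear; lia.
set c := ((\sum_(u < m) mean_excess T (t.+1 + u)) / k%:R)%R.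
set M := Num.min T c.
have [intM valM] := integral_affine_excess T M (k%:R^-1) tn.
apply: le_trans (_ : _ <= (M + mean_excess T t / k%:R)%R%:E) _.
  rewrite lee_fin sum_ord_shift mulrDl -/c /M ge_min.
  have e0 : (0 <= mean_excess T t / k%:R)%R by rewrite divr_ge0 ?mean_excess_ge0.
  case: (leP T c) => _; first by rewrite lerDl e0.
  by apply/orP; right; rewrite addrC lexx.
rewrite util_S // -valM; apply: le_integral_integrable_measurable intM _ _.
  exact: measurable_stage_payoff.
move=> v; apply: stage_payoff_ge => // [|A' iA']; first by rewrite /M ge_min lexx.
exact: IH.
Qed.

End ThresholdStrategy.

Lemma Exp_sum_y k : Exp F n (fun vs => (\sum_(1 <= j < k.+1) y j vs)%R%:E) =
  (rexpect n 0 (fun l => \sum_(1 <= j < k.+1) y j l))%:E.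
Proof. by apply: iexp_regular => //; apply: regular_sum => j; exact: regular_y. Qed.

Lemma Tk_rexpect k : Tk F n k =
  ((2 * k)%N%:R^-1 * rexpect n 0 (fun l => \sum_(1 <= j < k.+1) y j l))%:E.
Proof.
rewrite /Tk rexpect_sum // => [|j]; last exact: regular_y.
rewrite EFinM -sumEFin; congr (_ * _); apply: eq_bigr => j _.
by apply: iexp_regular => //; exact: regular_y.
Qed.

End ProphetGame.

Theorem mainTheorem2 (R : realType) (F : nat -> probability R R) (n k : nat)
  (i : 'I_k)
  (hnonneg : forall t, (t < n)%N -> F t [set x : R | (x < 0)%R]%classic = 0%E)
  (hmean : forall t, (t < n)%N -> (F t).-integrable setT (fun x : R => x%:E))
  (hnk : (k <= n)%N)
  (p : profile R k)
  (hp01 : forall j t v A, j != i -> (0 <= p j t v A <= 1)%R)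
  (hpmeas : forall j t A, j != i -> measurable_fun setT (fun v => p j t v A)) :
  utility F (upd p i (thr (k:=k) (Tk F n k))) i n >=
    (((2 * k)%N%:R)^-1)%R%:E *
      Exp F n (fun vs => ((\sum_(1 <= j < k.+1) y j vs)%R)%:E).
Proof.
have k_gt0 : (0 < k)%N by apply: leq_ltn_trans (ltn_ord i).
rewrite (@Tk_rexpect _ _ _ hmean) (@Exp_sum_y _ _ _ hmean) -EFinM.
set Y := rexpect _ _ _ _ _; set T := ((2 * k)%N%:R^-1 * Y)%R.
apply: le_trans _ (@util_thr_ge _ _ _ hmean _ _ _ _ hp01 hpmeas n 0 _ _ (finset.in_setT i)) => //.
have hY : Y = (2 * k%:R * T)%R.
  by rewrite /T natrM mulrA mulfV ?mul1r // mulf_neq0 // pnatr_eq0 -lt0n.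
have := @rexpect_sum_y_le _ _ _ hmean T k hnk; rewrite -/Y hY => YG.
rewrite lee_fin le_min lexx ler_pdivlMr ?ltr0n //=; nra.
Qed.
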